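(* Let $E$ be a finite nonempty set, $f:2^E\to\mathbb{N}$ an integral polymatroid rank function, $d\in\mathbb{N}$, and let $C_e:\mathbb{N}\times\mathbb{N}\to\mathbb{R}_+$, $e\in E$, be regular functions. Then for every $\vec t\in\mathbb{N}^E$, every optimal solution $\vec x^*(\vec t,d)$ of $P(\vec t,d)$ and every $\vec t'\in\mathbb{N}^E$ with $\|\vec t-\vec t'\|=1$, there is an optimal solution $\vec x^*(\vec t',d)$ of $P(\vec t',d)$ with $\|\vec x^*(\vec t,d)-\vec x^*(\vec t',d)\|\le 2$.
   Context: $\mathbb{N}=\{0,1,2,\dots\}$. A set function $f:2^E\to\mathbb{N}$ is an integral polymatroid rank function if $f(\emptyset)=0$, $f$ is monotone ($f(U)\le f(V)$ for $U\subseteq V$) and submodular. For $\vec x\in\mathbb{N}^E$, $x(U)=\sum_{e\in U}x_e$; $\mathbb{B}_f(d)=\{\vec x\in\mathbb{N}^E: x(U)\le f(U)\ \forall U\subseteq E,\ x(E)=d\}$. $P(\vec t,d)$: minimize $\sum_{e\in E}C_e(x_e;t_e)$ subject to $\vec x\in\mathbb{B}_f(d)$. $\|\cdot\|$ is the $L_1$-norm. For $C:\mathbb{N}\times\mathbb{N}\to\mathbb{R}$, $C^-(x;t)=C(x;t)-C(x-1;t)$ for $x\ge1$; $C$ is regular if $C^-(x;t)\le C^-(x;t+1)$ and $C^-(x;t+1)\le C^-(x+1;t)$ for all $x\ge1$, $t\in\mathbb{N}$. *)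

From mathcomp Require Import all_boot all_order all_algebra.
Set Implicit Arguments. Unset Strict Implicit. Unset Printing Implicit Defensive.
Import Order.TTheory GRing.Theory Num.Theory.

Definition polymatroid_rank (E : finType) (f : {set E} -> nat) : Prop :=
  [/\ f set0 = 0%N,
      (forall U V : {set E}, U \subset V -> (f U <= f V)%N) &
      (forall U V : {set E}, (f (U :|: V) + f (U :&: V) <= f U + f V)%N)].

Definition xsum (E : finType) (x : E -> nat) (U : {set E}) : nat :=
  (\sum_(e in U) x e)%N.

Definition in_base (E : finType) (f : {set E} -> nat) (d : nat) (x : E -> nat) : Prop :=
  (forall U : {set E}, (xsum x U <= f U)%N) /\ xsum x [set: E] = d.

(* C^-(x;t) = C(x;t) - C(x-1;t), for x >= 1 *)
Definition Cminus (R : pzRingType) (C : nat -> nat -> R) (x t : nat) : R :=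
  (C x t - C x.-1 t)%R.

Definition regular (R : realFieldType) (C : nat -> nat -> R) : Prop :=
  forall x t : nat, (1 <= x)%N ->
    (Cminus C x t <= Cminus C x t.+1)%R /\ (Cminus C x t.+1 <= Cminus C x.+1 t)%R.

Definition total_cost (R : realFieldType) (E : finType) (C : E -> nat -> nat -> R)
  (t x : E -> nat) : R := (\sum_(e : E) C e (x e) (t e))%R.

Definition optimal (R : realFieldType) (E : finType) (f : {set E} -> nat) (d : nat)
  (C : E -> nat -> nat -> R) (t x : E -> nat) : Prop :=
  in_base f d x /\
  forall y : E -> nat, in_base f d y -> (total_cost C t x <= total_cost C t y)%R.

(* L1 distance on N^E; (a - b) + (b - a) = |a - b| with truncated subtraction *)
Definition l1dist (E : finType) (x y : E -> nat) : nat :=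
  (\sum_(e : E) ((x e - y e) + (y e - x e)))%N.

From mathcomp Require Import all_boot all_order all_algebra.
From mathcomp Require Import zify lra.
From Stdlib Require Import FunctionalExtensionality.
Import Order.TTheory GRing.Theory Num.Theory.
Set Implicit Arguments. Unset Strict Implicit. Unset Printing Implicit Defensive.

(* The feasible set B_f(d) satisfies the exchange axiom of polymatroid bases:
   if y_i < x_i then some j with x_j < y_j makes both x - e_i + e_j and
   y + e_i - e_j feasible (take j outside the largest x-tight set avoiding i and
   inside the smallest y-tight set containing i; submodularity forces such a j).
   Let y be an optimal solution for t' and suppose |x* - y| > 2.  Since t and t'
   differ by one unit in a single coordinate k, we can choose the exchange pair so
   that (i, j) avoids the direction in which t moved at k, or has a gap of at least
   2 there.  Regularity then gives C_j^-(x*_j + 1; t_j) <= C_j^-(y_j; t'_j) and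
   C_i^-(y_i + 1; t'_i) <= C_i^-(x*_i; t_i); combined with the optimality of x* for t
   this shows that y + e_i - e_j is still optimal for t', and it is closer to x*
   by 2.  Iterating yields an optimal solution within distance 2. *)

Lemma eq_sum_off2 (V : nmodType) (I : finType) (g h : I -> V) (a b : I) :
  a != b -> (forall e, e != a -> e != b -> g e = h e) ->
  (\sum_e g e + (h a + h b))%R = (\sum_e h e + (g a + g b))%R.
Proof.
move=> ab gh; rewrite (bigD1 a) // [in RHS](bigD1 a) //= (bigD1 b) ?[b == a]eq_sym //=.
rewrite [in RHS](bigD1 b) ?[b == a]eq_sym //= (eq_bigr h) => [|e /andP[ea eb]]; last exact: gh.
move: (g a) (g b) (h a) (h b) (\sum_(i | _) h i)%R => x1 x2 y1 y2 s.
by rewrite (addrA x1) (addrA y1) (addrAC (x1 + x2)%R) (addrAC (y1 + y2)%R) (addrC (y1 + y2)%R).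
Qed.

Section Bases.
Variables (E : finType) (f : {set E} -> nat) (d : nat).
Implicit Types (x y : E -> nat) (U V X Y : {set E}) (a b i j : E).

Lemma xsum_setID x U V : xsum x U = xsum x (U :&: V) + xsum x (U :\: V).
Proof. exact: big_setID. Qed.

Lemma xsum_setU_setI x U V : xsum x (U :|: V) + xsum x (U :&: V) = xsum x U + xsum x V.
Proof.
rewrite (xsum_setID x (U :|: V) U) (xsum_setID x V U) setUK setDUl setDv set0U.
by rewrite setIC; lia.
Qed.

Lemma in_base_le x e : in_base f d x -> x e <= d.
Proof. by case=> _ <-; rewrite /xsum (bigD1 e) ?in_setT //= leq_addr. Qed.

Lemma in_base_sum x : in_base f d x -> \sum_e x e = d.
Proof. by case=> _ <-; apply: eq_bigl => e; rewrite in_setT. Qed.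

Definition transfer x a b : E -> nat :=
  fun e => if e == b then (x e).+1 else if e == a then (x e).-1 else x e.

Lemma xsum_transfer x a b U : a != b -> 0 < x a ->
  xsum (transfer x a b) U + (a \in U) = xsum x U + (b \in U).
Proof.
move=> ab xa; have sum_pred1 c : \sum_(e in U) ((e == c) : nat) = (c \in U).
  rewrite big_mkcond (bigD1 c) //= eqxx big1 => [|e /negbTE ->]; last by case: ifP.
  by case: (c \in U).
rewrite /xsum -!sum_pred1 -!big_split /=; apply: eq_bigr => e _.
rewrite /transfer; case: (eqVneq e b) => [->|_]; first by rewrite eq_sym (negbTE ab) addn0 addn1.
by case: (eqVneq e a) => [->|_]; rewrite ?addn0 // addn1 prednK.
Qed.

Lemma transfer_in_base x a b : a != b -> 0 < x a -> in_base f d x ->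
    (forall U, b \in U -> a \notin U -> xsum x U < f U) ->
  in_base f d (transfer x a b).
Proof.
move=> ab xa [xP xd] slack; split=> [U|]; last first.
  by have := xsum_transfer [set: E] ab xa; rewrite !in_setT; lia.
have := xsum_transfer U ab xa; have := xP U.
case aU: (a \in U); case bU: (b \in U) => //=; try lia.
by have := slack U; rewrite aU bU => /(_ isT isT); lia.
Qed.

Definition tight x U := xsum x U == f U.

Section Exchange.
Hypothesis fP : polymatroid_rank f.

Section Tight.
Variable x : E -> nat.
Hypothesis xP : forall U, xsum x U <= f U.

Lemma tight_setU_setI U V : tight x U -> tight x V -> tight x (U :|: V) && tight x (U :&: V).
Proof.
case: fP => _ _ fsub /eqP xU /eqP xV.
have := xsum_setU_setI x U V; have := xP (U :|: V); have := xP (U :&: V); have := fsub U V.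
by rewrite /tight; lia.
Qed.

Lemma max_tight_avoiding i :
  exists X, [/\ tight x X, i \notin X & forall U, tight x U -> i \notin U -> U \subset X].
Proof.
pose X := \bigcup_(U | tight x U && (i \notin U)) U.
have /andP[tX iX] : tight x X && (i \notin X).
  apply: (big_ind (fun S => tight x S && (i \notin S))) => //.
    by case: fP => f0 _ _; rewrite /tight /xsum big_set0 f0 in_set0.
  move=> S T /andP[tS iS] /andP[tT iT].
  by case/andP: (tight_setU_setI tS tT) => -> _; rewrite in_setU negb_or iS iT.
by exists X; split=> // U tU iU; apply: bigcup_sup; rewrite tU iU.
Qed.

(* [setT] must be allowed: for x in B_f(d) it need not be tight, since d <= f setT. *)
Lemma min_tight_containing i :
  exists Y, [/\ i \in Y, Y = setT \/ tight x Y & forall U, tight x U -> i \in U -> Y \subset U].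
Proof.
pose Y := \bigcap_(U | tight x U && (i \in U)) U.
have tY : Y = setT \/ tight x Y && (i \in Y).
  apply: (big_ind (fun S => S = setT \/ tight x S && (i \in S))); [by left | | by right].
  move=> S T [->|/andP[tS iS]] [->|/andP[tT iT]]; rewrite ?setTI ?setIT; try by [left | right; apply/andP].
  by right; case/andP: (tight_setU_setI tS tT) => _ ->; rewrite in_setI iS iT.
exists Y; split; first by case: tY => [->|/andP[]//]; rewrite in_setT.
- by case: tY => [|/andP[]]; [left | right].
- by move=> U tU iU; apply: bigcap_inf; rewrite tU iU.
Qed.

End Tight.

Lemma exchange_partner x y i X Y :
    in_base f d x -> in_base f d y -> y i < x i ->
    tight x X -> i \notin X -> i \in Y -> Y = setT \/ tight y Y ->
  exists2 j, j \in Y :\: X & x j < y j.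
Proof.
move=> [xP xd] [yP yd] yxi /eqP tX iX iY tY.
case: (boolP [exists j in Y :\: X, x j < y j]) => [/exists_inP[j]|]; first by exists j.
rewrite negb_exists_in => /forall_inP no_j; exfalso.
have iD : i \in Y :\: X by rewrite in_setD iX.
have : xsum y (Y :\: X) < xsum x (Y :\: X).
  rewrite /xsum (bigD1 i iD) [X in _ < X](bigD1 i iD) /= -addSn leq_add //.
  by apply: leq_sum => e /andP[eD _]; rewrite leqNgt; apply: no_j.
have := xsum_setID x Y X; have := xsum_setID y Y X; have := xsum_setU_setI x Y X.
case: tY => [->|/eqP tY]; rewrite ?setTU ?setTI.
  by have := yP X; lia.
by have := xP (Y :|: X); have := yP (Y :&: X); case: fP => _ _ /(_ Y X); lia.
Qed.

Lemma base_exchange x y i :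
    in_base f d x -> in_base f d y -> y i < x i ->
  exists j, [/\ x j < y j, in_base f d (transfer x i j) & in_base f d (transfer y j i)].
Proof.
move=> xB yB yxi.
have [X [tX iX maxX]] := max_tight_avoiding xB.1 i.
have [Y [iY tY minY]] := min_tight_containing yB.1 i.
have [j] := exchange_partner xB yB yxi tX iX iY tY; rewrite in_setD => /andP[jX jY] xyj.
have ij : i != j by apply/eqP => eij; move: xyj; rewrite -eij; lia.
exists j; split=> //; apply: transfer_in_base => //; try lia.
- move=> U jU iU; rewrite ltn_neqAle xB.1 andbT; apply: contra jX => tU.
  exact: subsetP (maxX U tU iU) j jU.
- by rewrite eq_sym.
- move=> U iU jU; rewrite ltn_neqAle yB.1 andbT; apply: contra jU => tU.
  exact: subsetP (minY U tU iU) j jY.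
Qed.

End Exchange.

End Bases.

Section Regular.
Variables (R : realFieldType) (c : nat -> nat -> R).
Hypothesis creg : regular c.

Lemma Cminus_le_addt a s n : 0 < a -> (Cminus c a s <= Cminus c a (s + n))%R.
Proof.
move=> a0; elim: n => [|n IH]; first by rewrite addn0.
by rewrite addnS; apply: le_trans IH (creg _ a0).1.
Qed.

Lemma Cminus_shift a s n : 0 < a -> (Cminus c a (s + n) <= Cminus c (a + n) s)%R.
Proof.
elim: n a => [|n IH] a a0; first by rewrite !addn0.
rewrite addnS -addSnnS; apply: le_trans (creg _ a0).2 _; exact: IH.
Qed.

Lemma Cminus_le_x a b s : 0 < a -> a <= b -> (Cminus c a s <= Cminus c b s)%R.
Proof.
move=> a0 /subnKC <-; apply: le_trans (Cminus_le_addt s (b - a) a0) _.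
exact: Cminus_shift.
Qed.

Lemma Cminus_le a b s s' : 0 < a -> a <= b -> a + s <= b + s' ->
  (Cminus c a s <= Cminus c b s')%R.
Proof.
move=> a0 ab abs; case: (leqP s s') => [/subnKC <- | /ltnW /subnKC <-].
  exact: le_trans (Cminus_le_addt _ _ a0) (Cminus_le_x _ a0 ab).
apply: le_trans (Cminus_shift _ _ a0) (Cminus_le_x _ _ _); first by rewrite addn_gt0 a0.
by move: abs; lia.
Qed.

End Regular.

Section Distance.
Variable E : finType.
Implicit Types x y s : E -> nat.

Lemma l1distE x y : l1dist x y = \sum_e (x e - y e) + \sum_e (y e - x e).
Proof. exact: big_split. Qed.

Lemma sum_subn_sym x y : \sum_e x e = \sum_e y e -> \sum_e (x e - y e) = \sum_e (y e - x e).
Proof.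
have : \sum_e x e + \sum_e (y e - x e) = \sum_e y e + \sum_e (x e - y e).
  by rewrite -!big_split; apply: eq_bigr => e _ /=; lia.
lia.
Qed.

Lemma exists_gap x y s : \sum_e s e < \sum_e (x e - y e) -> exists i, y i + s i < x i.
Proof.
move=> lt_sum; apply/existsP; apply: contraLR lt_sum; rewrite negb_exists -leqNgt.
by move=> /forallP no_gap; apply: leq_sum => e _; have := no_gap e; lia.
Qed.

Lemma l1dist_transfer x y i j : i != j -> y i < x i -> x j < y j ->
  l1dist x (transfer y j i) + 2 = l1dist x y.
Proof.
move=> ij yxi xyj; pose D z e := x e - z e + (z e - x e).
have : l1dist x (transfer y j i) + (D y i + D y j) =
       l1dist x y + (D (transfer y j i) i + D (transfer y j i) j).
  by apply: eq_sum_off2 => // e ei ej; rewrite /D /transfer (negbTE ei) (negbTE ej).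
by rewrite /D /transfer eqxx eq_sym (negbTE ij) eqxx; lia.
Qed.

Lemma l1dist1_comparable (t t' : E -> nat) : l1dist t t' = 1 ->
  (forall e, t e <= t' e) \/ (forall e, t' e <= t e).
Proof.
move/eqP/sum_nat_eq1 => [k [_ _ only_k]].
have tt' e : e != k -> t e = t' e by move=> ek; have := only_k e ek isT; lia.
case: (leqP (t k) (t' k)) => tk; [left | right] => e;
  by case: (eqVneq e k) => [->|/tt' ->]; rewrite ?leqnn // ltnW.
Qed.

End Distance.

Section Optimal.
Variables (R : realFieldType) (E : finType) (f : {set E} -> nat) (d : nat)
  (C : E -> nat -> nat -> R).
Implicit Types (t x y : E -> nat).

Lemma optimal_exists t : (exists x, in_base f d x) -> exists x, optimal f d C t x.
Proof.
case=> x0 x0B.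
pose val (g : {ffun E -> 'I_d.+1}) e := nat_of_ord (g e).
pose feasible g := [forall U, xsum (val g) U <= f U] && (xsum (val g) setT == d).
have feasibleP g : reflect (in_base f d (val g)) (feasible g).
  by apply: (iffP andP) => -[/forallP xP /eqP xd].
have val_onto x : in_base f d x -> exists g, val g = x.
  move=> xB; exists [ffun e => inord (x e)]; apply: functional_extensionality => e.
  by rewrite /val ffunE inordK // ltnS (in_base_le _ xB).
have [g0 g0x] := val_onto _ x0B.
have g0F : feasible g0 by apply/feasibleP; rewrite g0x.
have [gm /feasibleP gmB gm_min] :=
  real_arg_minP (F := fun g => total_cost C t (val g)) g0F (fun g _ => num_real _).
exists (val gm); split=> // x xB; have [g gx] := val_onto _ xB; subst x.
exact/gm_min/feasibleP.
Qed.

Lemma total_cost_transfer t x a b : a != b ->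
  total_cost C t (transfer x a b) =
  (total_cost C t x + Cminus (C b) (x b).+1 (t b) - Cminus (C a) (x a) (t a))%R.
Proof.
move=> ab; pose c z e := C e (z e) (t e).
have : (total_cost C t (transfer x a b) + (c x a + c x b) =
        total_cost C t x + (c (transfer x a b) a + c (transfer x a b) b))%R.
  by apply: eq_sum_off2 => // e ea eb; rewrite /c /transfer (negbTE ea) (negbTE eb).
by rewrite /c /transfer eqxx (negbTE ab) eqxx /Cminus /=; lra.
Qed.

Hypothesis Creg : forall e, regular (C e).

Lemma optimal_transfer t t' x y i j : optimal f d C t x -> optimal f d C t' y ->
    y i < x i -> x j < y j -> in_base f d (transfer x i j) -> in_base f d (transfer y j i) ->
    x j + t j < y j + t' j -> y i + t' i < x i + t i ->
  optimal f d C t' (transfer y j i).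
Proof.
move=> [_ x_min] [_ y_min] yxi xyj xB' yB' tj ti.
have ij : i != j by apply/eqP => eij; move: xyj; rewrite -eij; lia.
have := Cminus_le (Creg j) (ltn0Sn (x j)) xyj tj.
have := Cminus_le (Creg i) (ltn0Sn (y i)) yxi ti.
have := x_min _ xB'; rewrite total_cost_transfer // => x_le ci cj.
split=> // z zB; have := y_min _ zB.
by rewrite total_cost_transfer 1?eq_sym //; lra.
Qed.

Hypothesis fP : polymatroid_rank f.

Lemma optimal_closer t t' x y : optimal f d C t x -> optimal f d C t' y ->
    (forall e, t e <= t' e) \/ (forall e, t' e <= t e) -> 2 * l1dist t t' < l1dist x y ->
  exists2 y', optimal f d C t' y' & l1dist x y' < l1dist x y.
Proof.
move=> xo yo tt' far; have [xB yB] := (xo.1, yo.1).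
have halves := sum_subn_sym (etrans (in_base_sum xB) (esym (in_base_sum yB))).
have closer i j : y i < x i -> x j < y j ->
    in_base f d (transfer x i j) -> in_base f d (transfer y j i) ->
    x j + t j < y j + t' j -> y i + t' i < x i + t i ->
  exists2 y', optimal f d C t' y' & l1dist x y' < l1dist x y.
  move=> yxi xyj xB' yB' tj ti; exists (transfer y j i).
    exact: (optimal_transfer xo yo yxi xyj xB' yB' tj ti).
  have ij : i != j by apply/eqP => eij; move: xyj; rewrite -eij; lia.
  by have := l1dist_transfer ij yxi xyj; lia.
rewrite !l1distE halves in far; case: tt' => tt'.
- have [i gap] : exists i, y i + (t' i - t i) < x i by apply: exists_gap; lia.
  have yxi : y i < x i by lia.
  have [j [xyj xB' yB']] := base_exchange fP xB yB yxi.
  by apply: (closer i j) => //; have := tt' i; have := tt' j; lia.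
- have [j gap] : exists j, x j + (t j - t' j) < y j by apply: exists_gap; lia.
  have xyj : x j < y j by lia.
  have [i [yxi yB' xB']] := base_exchange fP yB xB xyj.
  by apply: (closer i j) => //; have := tt' i; have := tt' j; lia.
Qed.

End Optimal.

Theorem corollary3p3 (R : realFieldType) (E : finType) (f : {set E} -> nat) (d : nat)
  (C : E -> nat -> nat -> R) :
  (0 < #|E|)%N ->
  polymatroid_rank f ->
  (forall e x t, (0 <= C e x t)%R) ->
  (forall e, regular (C e)) ->
  forall (t : E -> nat) (xs : E -> nat), optimal f d C t xs ->
  forall t' : E -> nat, l1dist t t' = 1%N ->
  exists xs' : E -> nat, optimal f d C t' xs' /\ (l1dist xs xs' <= 2)%N.
Proof.
move=> _ fP _ Creg t xs xo t' tt'.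
have comparable := l1dist1_comparable tt'.
have [y0 y0o] := optimal_exists C t' (ex_intro _ xs xo.1).
have [n] := ubnP (l1dist xs y0); elim: n y0 y0o => [//|n IH] y yo yn.
case: (leqP (l1dist xs y) 2) => [near|far]; first by exists y.
have far' : 2 * l1dist t t' < l1dist xs y by rewrite tt'.
have [y' y'o closer] := optimal_closer Creg fP xo yo comparable far'.
by apply: (IH y' y'o); lia.
Qed.
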